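(* Let $\sigma$ be a linear extension of $\preceq$ and let $(r,k)$ be a bounding state satisfying the Active-item and Partial-order invariants such that $(r,k)$ bounds $\sigma$. Let $i\in\{1,\dots,n-1\}$ and $c\in\{0,1\}$, and define $c'=1-c$ if $\sigma(i)=r(i+1)$ and $c'=c$ otherwise. Then $\mathrm{AT}(\sigma,i,c')$ is bounded by $\mathrm{BC}((r,k),i,c)$.
   Context: Let $\preceq$ be a partial order on $S=\{1,\dots,n\}$, $n\ge2$, such that the identity permutation is a linear extension ($a\preceq b$ implies $a\le b$). A permutation is written $\sigma=(\sigma(1),\dots,\sigma(n))$ with $\sigma(p)$ the item in position $p$; it is a linear extension if for all $p<q$, $\neg(\sigma(q)\preceq\sigma(p))$. $\mathrm{AT}(\sigma,i,c)$: if $c=1$ and $\neg(\sigma(i)\preceq\sigma(i+1))$, swap the entries in positions $i,i+1$; return the result. Introduce a symbol $*$ and declare every comparison $x\preceq y$ in which $x$ or $y$ is $*$ to be false. A bounding state is a pair $(r,k)$ with $r\in(\{*\}\cup S)^n$, $k\in\{1,\dots,n\}$, whose non-$*$ entries are exactly $1,\dots,k$ (active items), each appearing once. Active-item invariant: every $a\le k$ appears in $r$. Partial-order invariant: if $r(p)=a\le k$, $r(q)=b\le k$, $a\neq b$, $a\preceq b$, then $p<q$. $(r,k)$ bounds $\sigma$ if for all $a\le k$ and all positions $p,q$: $\sigma(p)=a$ and $r(q)=a$ imply $p\le q$. $\mathrm{BC}((r,k),i,c)$: (1) if $c=1$ and $\neg(r(i)\preceq r(i+1))$, swap $r(i),r(i+1)$;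 (2) if now $r(n)=*$, set $r(n)\leftarrow k+1$, $k\leftarrow k+1$; (3) return $(r,k)$. *)

(* Items and positions are natural numbers in
   {1,...,n}; permutations are functions nat -> nat, bounding-state
   sequences are functions nat -> option nat (None = the symbol * ). *)
From mathcomp Require Import all_boot.
Set Implicit Arguments. Unset Strict Implicit. Unset Printing Implicit Defensive.

Definition inS (n x : nat) : bool := (1 <= x) && (x <= n).

Definition partial_order_on (n : nat) (le : nat -> nat -> bool) : Prop :=
  (forall a, inS n a -> le a a) /\
  (forall a b, inS n a -> inS n b -> le a b -> le b a -> a = b) /\
  (forall a b c, inS n a -> inS n b -> inS n c -> le a b -> le b c -> le a c).

Definition id_linext (n : nat) (le : nat -> nat -> bool) : Prop :=
  forall a b, inS n a -> inS n b -> le a b -> a <= b.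

(* sigma is a permutation of {1..n}: sigma p = item at position p *)
Definition is_perm (n : nat) (sigma : nat -> nat) : Prop :=
  (forall p, inS n p -> inS n (sigma p)) /\
  (forall p q, inS n p -> inS n q -> sigma p = sigma q -> p = q).

Definition linear_extension (n : nat) (le : nat -> nat -> bool)
  (sigma : nat -> nat) : Prop :=
  is_perm n sigma /\
  forall p q, inS n p -> inS n q -> p < q -> ~~ le (sigma q) (sigma p).

Definition swap_at {T} (f : nat -> T) (i : nat) : nat -> T :=
  fun p => if p == i then f i.+1 else if p == i.+1 then f i else f p.

Definition AT (le : nat -> nat -> bool) (sigma : nat -> nat) (i : nat)
  (c : bool) : nat -> nat :=
  if c && ~~ le (sigma i) (sigma i.+1) then swap_at sigma i else sigma.

Definition leo (le : nat -> nat -> bool) (x y : option nat) : bool :=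
  match x, y with Some a, Some b => le a b | _, _ => false end.

Definition bounding_state (n : nat) (r : nat -> option nat) (k : nat) : Prop :=
  inS n k /\
  (forall p a, inS n p -> r p = Some a -> (1 <= a) && (a <= k)) /\
  (forall a, (1 <= a) && (a <= k) -> exists p, inS n p /\ r p = Some a) /\
  (forall p q a, inS n p -> inS n q -> r p = Some a -> r q = Some a -> p = q).

Definition active_item_inv (n : nat) (r : nat -> option nat) (k : nat) : Prop :=
  forall a, (1 <= a) && (a <= k) -> exists p, inS n p /\ r p = Some a.

Definition partial_order_inv (n : nat) (le : nat -> nat -> bool)
  (r : nat -> option nat) (k : nat) : Prop :=
  forall p q a b, inS n p -> inS n q ->
    r p = Some a -> r q = Some b -> (1 <= a) && (a <= k) -> (1 <= b) && (b <= k) ->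
    a <> b -> le a b -> p < q.

Definition bounds (n : nat) (r : nat -> option nat) (k : nat)
  (sigma : nat -> nat) : Prop :=
  forall a p q, (1 <= a) && (a <= k) -> inS n p -> inS n q ->
    sigma p = a -> r q = Some a -> p <= q.

Definition BC (n : nat) (le : nat -> nat -> bool) (r : nat -> option nat)
  (k : nat) (i : nat) (c : bool) : (nat -> option nat) * nat :=
  let r1 := if c && ~~ leo le (r i) (r i.+1) then swap_at r i else r in
  if r1 n is None then
    ((fun p => if p == n then Some k.+1 else r1 p), k.+1)
  else (r1, k).

(* Swapping positions i and i+1 moves an item by at most one place, so a
   bound p <= q can only break for p = i+1, q = i, i.e. when the item a
   sits at position i in both sigma and r after the swaps.  Three ways lead
   there.  If both sequences swapped, then sigma(i) = a = r(i+1), which is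
   exactly when c' = ~~ c, so they cannot both swap.  If only sigma swapped,
   r(i) = sigma(i) and r did not swap although c' = c = 1, so r(i) ⪯ r(i+1);
   the bound places the item r(i+1) at position i+1 of sigma, whence
   sigma(i) ⪯ sigma(i+1) and sigma did not swap either.  Symmetrically, if
   only r swapped, r(i+1) = sigma(i+1) and sigma(i) ⪯ sigma(i+1); the item
   sigma(i) is active, the bound and the partial-order invariant put it at
   position i of r, so r(i) ⪯ r(i+1) and r did not swap.  Finally, the new
   item k+1 enters r at the last position, which bounds every position. *)
From mathcomp Require Import all_boot zify.

Set Implicit Arguments.
Unset Strict Implicit.
Unset Printing Implicit Defensive.

Lemma is_perm_surj n s b :
  is_perm n s -> inS n b -> exists2 p, inS n p & s p = b.
Proof.
move=> [s_in s_inj] Sb.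
have mem_iotaS x : (x \in iota 1 n) = inS n x by rewrite mem_iota /inS; lia.
have uniq_s : uniq (map s (iota 1 n)).
  rewrite map_inj_in_uniq ?iota_uniq // => x y.
  by rewrite !mem_iotaS; apply: s_inj.
have sub_s : {subset map s (iota 1 n) <= iota 1 n}.
  move=> y /mapP[x]; rewrite mem_iotaS => Sx ->.
  by rewrite mem_iotaS; apply: s_in.
have [_ eq_s] := uniq_min_size uniq_s sub_s ltac:(by rewrite size_map).
have : b \in map s (iota 1 n) by rewrite eq_s mem_iotaS.
by case/mapP=> p; rewrite mem_iotaS => Sp ->; exists p.
Qed.

Definition swap_pos (b : bool) (i p : nat) : nat :=
  if b then swap_at id i p else p.

Lemma swap_posE T b (f : nat -> T) i p :
  (if b then swap_at f i else f) p = f (swap_pos b i p).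
Proof.
by rewrite /swap_pos /swap_at; case: b => //; case: ifP => // _; case: ifP.
Qed.

Lemma inS_swap_pos n b i p :
  inS n i -> inS n i.+1 -> inS n p -> inS n (swap_pos b i p).
Proof.
by rewrite /swap_pos /swap_at; case: b => //; case: ifP => // _; case: ifP.
Qed.

Lemma leq_swap_pos b1 b2 i p q :
  swap_pos b1 i p <= swap_pos b2 i q -> p <= q \/ [/\ p = i.+1, q = i & b1 || b2].
Proof.
rewrite /swap_pos /swap_at => le_pq.
have [|gt_pq] := leqP p q; [by left | right].
by case: b1 b2 le_pq => -[] /=; repeat case: eqP => //=; try lia; split; lia.
Qed.

Lemma bounds_extend n r k s :
  (forall q a, inS n q -> r q = Some a -> a <= k) -> bounds n r k s ->
  bounds n (fun q => if q == n then Some k.+1 else r q) k.+1 s.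
Proof.
move=> r_le_k r_bounds a p q a_act Sp Sq sa; case: eqP => [-> _|_ rq].
  by move: Sp; rewrite /inS; lia.
have a_le_k := r_le_k _ _ Sq rq.
by apply: r_bounds sa rq => //; lia.
Qed.

Section SwapStep.

Variables (n : nat) (le : nat -> nat -> bool) (sigma : nat -> nat).
Variables (r : nat -> option nat) (k i : nat).

Hypothesis le_leq : id_linext n le.
Hypothesis sigma_linext : linear_extension n le sigma.
Hypothesis r_range :
  forall p a, inS n p -> r p = Some a -> (1 <= a) && (a <= k).
Hypothesis r_inj :
  forall p q a, inS n p -> inS n q -> r p = Some a -> r q = Some a -> p = q.
Hypothesis r_active : active_item_inv n r k.
Hypothesis r_order : partial_order_inv n le r k.
Hypothesis r_bounds : bounds n r k sigma.
Hypothesis k_le_n : k <= n.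
Hypotheses (Si : inS n i) (Si1 : inS n i.+1).

Lemma le_sigma_of_leo :
  r i = Some (sigma i) -> leo le (r i) (r i.+1) -> le (sigma i) (sigma i.+1).
Proof.
have [_ sigma_ord] := sigma_linext.
move=> ri; rewrite ri /=; case ri1: (r i.+1) => [b|] // le_ab.
have b_act := r_range Si1 ri1.
have Sb : inS n b by rewrite /inS; lia.
have [pb Spb sb] := is_perm_surj sigma_linext.1 Sb.
have b_neq : b <> sigma i.
  by move=> eb; have := r_inj Si Si1 ri; rewrite ri1 eb => /(_ erefl); lia.
have := r_bounds b_act Spb Si1 sb ri1.
case: (ltngtP pb i) => [pb_lt|pb_gt|pb_i] pb_le.
- by have := sigma_ord _ _ Spb Si pb_lt; rewrite sb le_ab.
- have -> : i.+1 = pb by lia.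
  by rewrite sb.
- by move: sb; rewrite pb_i => /esym/b_neq.
Qed.

Lemma leo_of_le_sigma :
  r i.+1 = Some (sigma i.+1) -> le (sigma i) (sigma i.+1) ->
  leo le (r i) (r i.+1).
Proof.
have [[sigma_in sigma_inj] _] := sigma_linext.
move=> ri1 le_sigma; have si1_act := r_range Si1 ri1.
have si_neq : sigma i <> sigma i.+1 by move/(sigma_inj _ _ Si Si1); lia.
have si_act : (1 <= sigma i) && (sigma i <= k).
  have := le_leq (sigma_in _ Si) (sigma_in _ Si1) le_sigma.
  by move: (sigma_in _ Si) si1_act; rewrite /inS; lia.
have [qb [Sqb rqb]] := r_active si_act.
have := r_bounds si_act Si Sqb erefl rqb.
case: (ltngtP qb i.+1) => [qb_lt|qb_gt|eqb] qb_ge.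
- have qb_i : qb = i by lia.
  by move: rqb; rewrite qb_i => ->; rewrite ri1.
- by have := r_order Sqb Si1 rqb ri1 si_act si1_act si_neq le_sigma; lia.
- by move: rqb; rewrite eqb; congruence.
Qed.

Lemma bounds_swap_step (c : bool) :
  bounds n (if c && ~~ leo le (r i) (r i.+1) then swap_at r i else r) k
    (AT le sigma i (if r i.+1 == Some (sigma i) then ~~ c else c)).
Proof.
have [[_ sigma_inj] _] := sigma_linext.
set c' := (if _ then ~~ c else c); rewrite /AT.
set bs := c' && _; set br := c && _.
move=> a p q a_act Sp Sq; rewrite !swap_posE => sa ra.
have Sp' := inS_swap_pos bs Si Si1 Sp.
have Sq' := inS_swap_pos br Si Si1 Sq.
have := r_bounds a_act Sp' Sq' sa ra.
case/leq_swap_pos => // -[ep eq swapped]; move: sa ra.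
rewrite ep eq /swap_pos /swap_at eqxx (gtn_eqF (ltnSn i)) eqxx.
case Ebs: bs; case Ebr: br => <- ra.
- move: Ebs Ebr; rewrite /bs /br /c' ra eqxx.
  by move=> /andP[/negP not_c _] /andP[].
- have ri1_neq : (r i.+1 == Some (sigma i)) = false.
    by apply/eqP => ri1; have /eqP := r_inj Si Si1 ra ri1; rewrite ltn_eqF.
  move: Ebs Ebr; rewrite /bs /br /c' ri1_neq => /andP[-> /negP le_sigma] /=.
  by move/negbFE/(le_sigma_of_leo ra).
- have ri1_neq : (r i.+1 == Some (sigma i)) = false.
    by rewrite ra; apply/eqP => -[/(sigma_inj _ _ Si1 Si)/eqP]; rewrite gtn_eqF.
  move: Ebr Ebs; rewrite /bs /br /c' ri1_neq => /andP[-> /negP leo_r] /=.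
  by move/negbFE/(leo_of_le_sigma ra).
- by move: swapped; rewrite Ebs Ebr.
Qed.

End SwapStep.

Theorem theorem2 (n : nat) (le : nat -> nat -> bool) (sigma : nat -> nat)
  (r : nat -> option nat) (k i : nat) (c : bool) :
  2 <= n ->
  partial_order_on n le ->
  id_linext n le ->
  linear_extension n le sigma ->
  bounding_state n r k ->
  active_item_inv n r k ->
  partial_order_inv n le r k ->
  bounds n r k sigma ->
  1 <= i <= n.-1 ->
  let c' := if r i.+1 == Some (sigma i) then ~~ c else c in
  bounds n (BC n le r k i c).1 (BC n le r k i c).2 (AT le sigma i c').
Proof.
move=> _ _ le_leq sigma_linext [Sk [r_range [_ r_inj]]] r_active r_order
  r_bounds /andP[i_ge1 i_lt] c'.
have Si : inS n i by rewrite /inS; lia.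
have Si1 : inS n i.+1 by rewrite /inS; lia.
have k_le_n : k <= n by move: Sk; rewrite /inS; lia.
have step := bounds_swap_step le_leq sigma_linext r_range r_inj r_active r_order
  r_bounds k_le_n Si Si1 (c := c).
rewrite /BC; set r1 := (if c && _ then _ else _).
case: (r1 n) => [?|] //=; apply: bounds_extend step.
move=> q a Sq; rewrite /r1 swap_posE.
by move=> /(r_range _ _ (inS_swap_pos _ Si Si1 Sq))/andP[].
Qed.
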